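(* Let $\lambda_{\max}\ge 1$ and let $F:[0,\lambda_{\max}]\to\mathbb{R}_+$ be continuously differentiable with $F(0)=0$. Let $$F^\star=\sup\Big\{\mathbb{E}_\alpha[F(X)] : \alpha \text{ a probability measure on }[0,\lambda_{\max}],\ X\sim\alpha,\ \mathbb{E}_\alpha[X]\le 1\Big\}.$$ Then for every stable control policy $\lambda:\mathbb{Z}_+\to[0,\lambda_{\max}]$, with stationary queue length $\bar q\sim\pi$, we have $\mathbb{E}_\pi[F(\lambda(\bar q))]\le F^\star$.
   Context: A control policy is a function $\lambda:\mathbb{Z}_+\to[0,\lambda_{\max}]$. It defines a continuous-time birth–death Markov chain (the queue length of a single-server queue with service rate $1$) on $\mathbb{Z}_+$ with transition rate $\lambda(q)$ from $q$ to $q+1$ and rate $1$ from $q$ to $q-1$ for $q\ge 1$. Let $\mathcal S$ be the set of states reachable from $0$ (i.e. $\mathcal S=\{0,1,\dots,q_0\}$ with $q_0$ the first $q\ge 1$ with $\lambda(q)=0$, or $\mathcal S=\mathbb{Z}_+$ if there is none). The policy is called stable if $\sum_{i\in\mathcal S}\prod_{q=0}^{i}\lambda(q)<\infty$, i.e. the chain restricted to $\mathcal S$ is positive recurrent; then $\pi$ denotes its unique stationary distribution on $\mathcal S$ and $\bar q$ a random variable with law $\pi$. *)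

From HB Require Import structures.
From mathcomp Require Import all_boot all_order all_algebra.
From mathcomp Require Import all_classical all_reals all_analysis.
Set Implicit Arguments. Unset Strict Implicit. Unset Printing Implicit Defensive.
Import Order.TTheory GRing.Theory Num.Theory numFieldNormedType.Exports.
Local Open Scope classical_set_scope.
Local Open Scope ring_scope.

(* Reachable set S from state 0: i \in S iff lambda q <> 0 for all 1 <= q < i,
   i.e. S = {0,...,q0} with q0 the first q >= 1 with lambda q = 0, or all of N. *)
Definition inS {R : realType} (lam : nat -> R) (i : nat) : Prop :=
  forall q : nat, (1 <= q)%N -> (q < i)%N -> lam q <> 0.

Definition stable {R : realType} (lam : nat -> R) : Prop :=
  (\sum_(i <oo | `[< inS lam i >]) ((\prod_(q < i.+1) lam q)%:E) < +oo)%E.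

(* pi is a stationary distribution on S of the birth-death chain with birth
   rate lam q (q -> q+1) and death rate 1 (q -> q-1, q >= 1):
   a probability distribution supported on S satisfying the global balance
   equations pi Q = 0. *)
Definition stationary_dist {R : realType} (lam : nat -> R) (pi : nat -> R) : Prop :=
  [/\ (forall i, 0 <= pi i),
      (forall i, ~ inS lam i -> pi i = 0),
      ((\sum_(i <oo) ((pi i)%:E))%E = 1%E) &
      (forall j : nat,
          pi j * (lam j + (if j is 0 then 0 else 1)) =
          (if j is k.+1 then pi k * lam k else 0) + pi j.+1)].

Definition I0 {R : realType} (lmax : R) : set R := [set x : R | 0 <= x <= lmax].

Definition Fstar {R : realType} (F : R -> R) (lmax : R) : \bar R :=
  ereal_sup [set (\int[P]_(x in I0 lmax) (F x)%:E)%E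
            | P in [set P : probability R R |
                     P (I0 lmax) = 1%E /\
                     (\int[P]_(x in I0 lmax) x%:E <= 1)%E]].

(** The law of the arrival rate [lam q] seen by the stationary queue is
    itself a feasible distribution for [F^star]: it lives on [[0, lmax]],
    and its mean is at most [1] because in a birth-death chain the flow
    across the cut between [j] and [j + 1] balances, [pi j * lam j = pi (j + 1)],
    so that [E_pi[lam] = sum_j pi (j + 1) = 1 - pi 0].  Hence
    [E_pi[F (lam q)]] is one of the values whose supremum is [F^star]. *)
From HB Require Import structures.
From mathcomp Require Import all_boot all_order all_algebra.
From mathcomp Require Import all_classical all_reals all_analysis.
From mathcomp Require Import measurable_realfun.
Set Implicit Arguments. Unset Strict Implicit. Unset Printing Implicit Defensive.
Import Order.TTheory GRing.Theory Num.Theory numFieldNormedType.Exports.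
Local Open Scope classical_set_scope.
Local Open Scope ring_scope.

Record pmf (R : realType) := Pmf {
  pmf_fun :> nat -> R;
  pmf_ge0 : forall i, 0 <= pmf_fun i;
  pmf_sum1 : (\sum_(i <oo) (pmf_fun i)%:E = 1)%E }.

Section dirac_mixture.
Context {d : measure_display} {T : measurableType d} {R : realType}.
Variables (p : pmf R) (x : nat -> T).
Local Open Scope ereal_scope.

Definition dirac_mixture : set T -> \bar R :=
  mseries (fun i => mscale (NngNum (pmf_ge0 p i)) \d_(x i)) 0.

HB.instance Definition _ := Measure.on dirac_mixture.

Lemma dirac_mixtureE A :
  dirac_mixture A = \sum_(i <oo) (p i)%:E * \d_(x i) A.
Proof. by []. Qed.

Lemma dirac_mixture_supported (D : set T) :
  (forall i, D (x i)) -> dirac_mixture D = 1.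
Proof.
move=> Dx; rewrite dirac_mixtureE -(pmf_sum1 p); apply: eq_eseriesr => i _.
by rewrite diracE mem_set// mule1.
Qed.

HB.instance Definition _ := Measure_isProbability.Build _ _ _ dirac_mixture
  (dirac_mixture_supported (fun=> I)).

Lemma integral_dirac_mixture (D : set T) (f : T -> \bar R) :
  measurable D -> (forall i, D (x i)) ->
  (forall t, D t -> 0 <= f t) -> measurable_fun D f ->
  \int[dirac_mixture]_(t in D) f t = \sum_(i <oo) (p i)%:E * f (x i).
Proof.
move=> mD Dx f_ge0 mf.
rewrite ge0_integral_measure_series//; apply: eq_eseriesr => i _.
by rewrite ge0_integral_mscale// integral_dirac// diracE mem_set// mul1e.
Qed.

End dirac_mixture.

Lemma birth_death_cut_balance (R : nzRingType) (lam pi : nat -> R) :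
  (forall j, pi j * (lam j + (if j is 0 then 0 else 1)) =
             (if j is k.+1 then pi k * lam k else 0) + pi j.+1) ->
  forall j, pi j * lam j = pi j.+1.
Proof.
move=> balance; elim=> [|j IH]; first by have := balance 0%N; rewrite addr0 add0r.
have := balance j.+1; rewrite IH mulrDr mulr1 => h.
by apply: (addIr (pi j.+1)); rewrite h addrC.
Qed.

Lemma stationary_mean_rate_le1 (R : realType) (lam pi : nat -> R) :
  stationary_dist lam pi -> (\sum_(i <oo) (pi i * lam i)%:E <= 1)%E.
Proof.
case=> pi_ge0 _ pi_sum1 /birth_death_cut_balance cut.
have pi_ge0E i : (0 <= (pi i)%:E)%E by rewrite lee_fin.
under eq_eseriesr do rewrite cut -addn1.
rewrite (@nneseries_addn _ (fun i => (pi i)%:E) 1)// -pi_sum1.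
by rewrite [leRHS]nneseries_recl// leeDr.
Qed.

Lemma I0E (R : realType) (lmax : R) : I0 lmax = `[0, lmax]%classic.
Proof. by apply/funext => x; rewrite /I0 /= in_itv. Qed.

Theorem proposition4p1 (R : realType) (lmax : R) (F : R -> R)
  (lam : nat -> R) (pi : nat -> R) :
  1 <= lmax ->
  (forall x : R, derivable F x 1) -> continuous (F^`())%classic ->
  (forall x : R, 0 <= x <= lmax -> 0 <= F x) ->
  F 0 = 0 ->
  (forall q : nat, 0 <= lam q <= lmax) ->
  stable lam ->
  stationary_dist lam pi ->
  (\sum_(i <oo) ((pi i * F (lam i))%:E) <= Fstar F lmax)%E.
Proof.
move=> _ dF _ F_ge0 _ lam_range _ stat.
have [pi_ge0 _ pi_sum1 _] := stat.
pose law := dirac_mixture (Pmf pi_ge0 pi_sum1) lam.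
have mI : measurable (I0 lmax) by rewrite I0E; exact: measurable_itv.
have mF : measurable_fun (I0 lmax) (fun x => (F x)%:E).
  apply/measurable_EFinP; apply: subspace_continuous_measurable_fun => //.
  rewrite I0E; apply: derivable_within_continuous => x _; exact: dF.
apply: ereal_sup_ubound; exists law; first split.
- exact: dirac_mixture_supported.
- rewrite integral_dirac_mixture//; last by move=> x /andP[x_ge0 _]; rewrite lee_fin.
  by under eq_eseriesr do rewrite -EFinM; exact: stationary_mean_rate_le1.
- by rewrite integral_dirac_mixture.
Qed.
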